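(* Let $K$ be a division ring and $m,n\ge2$ integers. The following are equivalent: (i) for every torsion-free group $G$ there are no $a,b\in K[G]$ with $\operatorname{rank}(a)=m$, $\operatorname{rank}(b)=n$ and $ab=1$; (ii) for every $\Gamma=\Gamma_\pi\in\mathrm{ULIE}_K(m,n)$ with its canonical generators $1=a_0,a_1,\dots,a_{m-1}$ and $1=b_0,b_1,\dots,b_{n-1}$, letting $\phi:\Gamma\to\Gamma/N_{\mathrm{tor}}(\Gamma)$ be the quotient map, we have $\phi(a_i)=\phi(a_{i'})$ for some $0\le i<i'\le m-1$ or $\phi(b_j)=\phi(b_{j'})$ for some $0\le j<j'\le n-1$.
   Context: $K$ is a nonzero division ring, $K[G]$ the group ring, and the rank of an element is the number of group elements with nonzero coefficient. For $m,n\ge2$ and a partition $\pi$ of $S_{m,n}=\{0,\dots,m-1\}\times\{0,\dots,n-1\}$, $(i,j)\sim_\pi(i',j')$ means same block; $\Gamma_\pi$ is the group with (canonical) generators $a_0,\dots,a_{m-1},b_0,\dots,b_{n-1}$ and relations $a_0=b_0=1$, $a_ib_j=a_{i'}b_{j'}$ whenever $(i,j)\sim_\pi(i',j')$. $\pi$ is nondegenerate if in $\Gamma_\pi$ the $a_i$ are pairwise distinct and the $b_j$ are pairwise distinct. Given nonzero $r_0,\dots,r_{m-1},s_0,\dots,s_{n-1}\in K$, $\pi$ is realizable with them if for each block $E$, $\sum_{(i,j)\in E}r_is_j$ equals $1$ if $(0,0)\in E$, else $0$; ordering partitions by refinement, $\pi$ is minimally realizable over $K$ if for some choice of nonzero elements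 of $K$ it is minimal among partitions realizable with them. $\mathrm{ULIE}_K(m,n)$ is the set of $\Gamma_\pi$ with $\pi$ a nondegenerate partition of $S_{m,n}$ minimally realizable over $K$. For a group $\Gamma$, $N^{(1)}_{\mathrm{tor}}(\Gamma)$ is the smallest normal subgroup containing all elements of finite order; set $N_{\mathrm{tor},1}=N^{(1)}_{\mathrm{tor}}(\Gamma)$ and, with $\phi_k:\Gamma\to\Gamma/N_{\mathrm{tor},k}$ the quotient map, $N_{\mathrm{tor},k+1}=\phi_k^{-1}(N^{(1)}_{\mathrm{tor}}(\Gamma/N_{\mathrm{tor},k}))$; $N_{\mathrm{tor}}(\Gamma)=\bigcup_{k\ge1}N_{\mathrm{tor},k}$. *)

From HB Require Import structures.
From mathcomp Require Import all_boot all_order all_algebra.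
From Stdlib Require List.
Set Implicit Arguments. Unset Strict Implicit. Unset Printing Implicit Defensive.
Import GRing.Theory.
Local Open Scope ring_scope.

Record group := Group {
  gcar :> Type;
  gmul : gcar -> gcar -> gcar;
  ginv : gcar -> gcar;
  gone : gcar;
  gmulA : forall x y z, gmul x (gmul y z) = gmul (gmul x y) z;
  gmul1 : forall x, gmul gone x = x;
  gmulV : forall x, gmul (ginv x) x = gone }.

Fixpoint gpow (G : group) (g : G) (k : nat) : G :=
  match k with 0 => gone G | k'.+1 => gmul g (gpow g k') end.

Definition torsion_free (G : group) : Prop :=
  forall (g : G) (k : nat), (0 < k)%N -> gpow g k = gone G -> g = gone G.

(* Elements of the group ring K[G] are finitely supported functions G -> K.
   [support_list a s] : s lists (without repetition) exactly the group
   elements with nonzero coefficient in a. *)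
Definition support_list (K : nzRingType) (G : group) (a : G -> K) (s : seq G) :=
  List.NoDup s /\ forall g, a g != 0 <-> List.In g s.

Definition rank_eq (K : nzRingType) (G : group) (a : G -> K) (r : nat) :=
  exists s, support_list a s /\ size s = r.

Definition gr_prod_is_one (K : nzRingType) (G : group) (a b : G -> K) :=
  forall s, support_list a s -> forall x : G,
    let c := \sum_(h <- s) (a h * b (gmul (ginv h) x)) in
    (x = gone G -> c = 1) /\ (x <> gone G -> c = 0).

(* Generators a_i (i < m) and b_j (j < n); a letter is (inverted?, gen). *)
Section Words.
Variables m n : nat.
Definition letter := (bool * ('I_m + 'I_n))%type.
Definition word := seq letter.
Definition linv (x : letter) : letter := (~~ x.1, x.2).
Definition winv (w : word) : word := rev (map linv w).
Definition wpow (w : word) (k : nat) : word := flatten (nseq k w).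
Definition gA (i : 'I_m) : word := [:: (false, inl i)].
Definition gB (j : 'I_n) : word := [:: (false, inr j)].

(* [ncl S w] : the word w represents an element of the normal closure of
   (the elements represented by) S in the free group on the generators.
   The closure under insertion/deletion of x x^-1 makes this exactly the
   preimage in the word monoid of that normal subgroup. *)
Inductive ncl (S : word -> Prop) : word -> Prop :=
  | ncl_nil : ncl S [::]
  | ncl_gen w : S w -> ncl S w
  | ncl_inv w : ncl S w -> ncl S (winv w)
  | ncl_mul w v : ncl S w -> ncl S v -> ncl S (w ++ v)
  | ncl_conj u w : ncl S w -> ncl S (u ++ w ++ winv u)
  | ncl_ins u v x : ncl S (u ++ v) -> ncl S (u ++ [:: x; linv x] ++ v)
  | ncl_del u v x : ncl S (u ++ [:: x; linv x] ++ v) -> ncl S (u ++ v).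
End Words.

Definition cell (m n : nat) := ('I_m * 'I_n)%type.

Definition same_block (m n : nat) (P : {set {set cell m n}}) (p q : cell m n) :=
  exists2 E, E \in P & (p \in E) && (q \in E).

Definition relators (m n : nat) (P : {set {set cell m n}}) (w : word m n) : Prop :=
  (exists i : 'I_m, nat_of_ord i = 0%N /\ w = gA n i)
  \/ (exists j : 'I_n, nat_of_ord j = 0%N /\ w = gB m j)
  \/ (exists i j i' j', same_block P (i, j) (i', j') /\
        w = gA n i ++ gB m j ++ winv (gB m j') ++ winv (gA n i')).

Definition is_one_Gamma (m n : nat) (P : {set {set cell m n}}) (w : word m n) :=
  ncl (relators P) w.

(* Preimage in the free group of N_{tor,k}(Gamma_pi); level 0 is the
   trivial subgroup of Gamma_pi (i.e. the kernel of F -> Gamma_pi).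
   N_{tor,k+1} = preimage of the normal closure of the torsion elements of
   Gamma / N_{tor,k}. *)
Fixpoint Ntor_level (m n : nat) (P : {set {set cell m n}}) (k : nat) : word m n -> Prop :=
  match k with
  | 0 => is_one_Gamma P
  | k'.+1 => ncl (fun w => exists2 p, (0 < p)%N & Ntor_level P k' (wpow w p))
  end.

Definition Ntor (m n : nat) (P : {set {set cell m n}}) (w : word m n) : Prop :=
  exists k, Ntor_level P k w.

Definition nondegenerate (m n : nat) (P : {set {set cell m n}}) : Prop :=
  (forall i i' : 'I_m, i != i' -> ~ is_one_Gamma P (gA n i ++ winv (gA n i')))
  /\ (forall j j' : 'I_n, j != j' -> ~ is_one_Gamma P (gB m j ++ winv (gB m j'))).

Definition realizable (K : nzRingType) (m n : nat) (P : {set {set cell m n}})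
    (r : 'I_m -> K) (s : 'I_n -> K) : Prop :=
  forall E, E \in P ->
    let c := \sum_(p in E) (r p.1 * s p.2) in
    ((exists2 p, p \in E & (nat_of_ord p.1 == 0%N) && (nat_of_ord p.2 == 0%N)) -> c = 1)
    /\ (~ (exists2 p, p \in E & (nat_of_ord p.1 == 0%N) && (nat_of_ord p.2 == 0%N)) -> c = 0).

Definition refines (T : finType) (P Q : {set {set T}}) : Prop :=
  forall E, E \in P -> exists2 F, F \in Q & E \subset F.

Definition minimally_realizable (K : nzRingType) (m n : nat)
    (P : {set {set cell m n}}) : Prop :=
  exists (r : 'I_m -> K) (s : 'I_n -> K),
    (forall i, r i != 0) /\ (forall j, s j != 0) /\ realizable P r s /\
    (forall Q : {set {set cell m n}}, partition Q [set: cell m n] ->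
        realizable Q r s -> refines Q P -> Q = P).

Definition in_ULIE (K : nzRingType) (m n : nat) (P : {set {set cell m n}}) : Prop :=
  partition P [set: cell m n] /\ nondegenerate P /\ minimally_realizable K P.

(* (ii) -> (i).  Let ab = 1 in K[G], G torsion-free, with supports {a_i} and {b_j}.
   The coefficient of 1 in ab is nonzero, so some a_i b_j = 1; reindexing and
   translating (a_i |-> a_0^-1 a_i, b_j |-> b_j b_0^-1) makes a_0 = b_0 = 1.
   Grouping the cells (i,j) by the value of a_i b_j gives a partition realizable
   with the coefficients of a and b, and a minimal realizable refinement pi of it
   still only identifies cells with equal products.  Hence the a_i, b_j define a
   homomorphism Gamma_pi -> G, which kills N_tor(Gamma_pi) because G is
   torsion-free, and is injective on the generators.  So pi lies in ULIE_K(m,n)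
   and its generators stay distinct modulo N_tor, contradicting (ii).
   (i) -> (ii).  If the generators of some realizable Gamma_pi stay distinct
   modulo N_tor, then Gamma_pi / N_tor(Gamma_pi) is torsion-free, and in its group
   ring a = sum r_i a_i, b = sum s_j b_j have ranks m and n.  The coefficient of g
   in ab is the sum of the block sums over the blocks whose common product is g,
   which realizability makes 1 for g = 1 and 0 otherwise, contradicting (i). *)

From Stdlib Require List.
From Stdlib Require Import Permutation ClassicalEpsilon.
From Pilot Require Import Defs.
From HB Require Import structures.
From mathcomp Require Import all_boot all_order all_algebra perm.
Set Implicit Arguments. Unset Strict Implicit. Unset Printing Implicit Defensive.
Import GRing.Theory.
Local Open Scope ring_scope.

(* Group carriers have no decidable equality: coefficients are selected by
   classical tests. *)
Definition asbool (A : Prop) : bool :=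
  if excluded_middle_informative A then true else false.

Lemma asboolP (A : Prop) : reflect A (asbool A).
Proof. by rewrite /asbool; case: excluded_middle_informative => h; constructor. Qed.

Section GroupFacts.
Variable G : group.
Local Notation "x * y" := (gmul x y).
Local Notation "1" := (gone G).
Implicit Types x y z : G.

Lemma gmulrV x : x * ginv x = 1.
Proof.
have -> : x * ginv x = ginv (ginv x) * ginv x * (x * ginv x) by rewrite gmulV gmul1.
by rewrite -gmulA (gmulA (ginv x) x) gmulV gmul1 gmulV.
Qed.

Lemma gmulr1 x : x * 1 = x.
Proof. by rewrite -(gmulV x) gmulA gmulrV gmul1. Qed.

Lemma gmulKl x y : ginv x * (x * y) = y.
Proof. by rewrite gmulA gmulV gmul1. Qed.

Lemma gmulKr x y : x * (ginv x * y) = y.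
Proof. by rewrite gmulA gmulrV gmul1. Qed.

Lemma ginvK x : ginv (ginv x) = x.
Proof. by rewrite -[LHS]gmulr1 -(gmulV x) gmulKl. Qed.

Lemma ginv1 : ginv 1 = 1.
Proof. by rewrite -[LHS]gmul1 gmulrV. Qed.

Lemma ginvM x y : ginv (x * y) = ginv y * ginv x.
Proof.
have e : (x * y) * (ginv y * ginv x) = 1.
  by rewrite -gmulA (gmulA y) gmulrV gmul1 gmulrV.
by rewrite -[RHS](gmulKl (x * y)) e gmulr1.
Qed.

Lemma gmulrV_eq1 x y : x * ginv y = 1 -> x = y.
Proof. by move=> e; rewrite -(gmulr1 x) -(gmulV y) gmulA e gmul1. Qed.

Lemma gmul_solve x y z : (x * y = z) <-> (ginv x * z = y).
Proof. by split=> [<-|<-]; rewrite ?gmulKl ?gmulKr. Qed.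

End GroupFacts.

Section WordEvaluation.
Variables (m n : nat) (G : group) (fa : 'I_m -> G) (fb : 'I_n -> G).

Definition leval (x : letter m n) : G :=
  let g := match x.2 with inl i => fa i | inr j => fb j end in
  if x.1 then ginv g else g.

Definition weval (w : word m n) : G := foldr (fun x g => gmul (leval x) g) (gone G) w.

Lemma weval_cat u v : weval (u ++ v) = gmul (weval u) (weval v).
Proof. by elim: u => [|x u IH] /=; rewrite ?gmul1 // IH gmulA. Qed.

Lemma leval_linv x : leval (linv x) = ginv (leval x).
Proof. by case: x => [[] g]; rewrite /leval /= ?ginvK. Qed.

Lemma weval_winv w : weval (winv w) = ginv (weval w).
Proof.
elim: w => [|x w IH]; first by rewrite ginv1.
by rewrite /winv /= rev_cons -cats1 weval_cat -/(winv w) IH /= gmulr1 leval_linv ginvM.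
Qed.

Lemma weval_wpow w k : weval (wpow w k) = gpow (weval w) k.
Proof. by elim: k => //= k IH; rewrite weval_cat IH. Qed.

Lemma weval_gA i : weval (gA n i) = fa i.
Proof. exact: gmulr1. Qed.

Lemma weval_gB j : weval (gB m j) = fb j.
Proof. exact: gmulr1. Qed.

Lemma weval_gA_gA i i' : weval (gA n i ++ winv (gA n i')) = gmul (fa i) (ginv (fa i')).
Proof. by rewrite weval_cat weval_winv !weval_gA. Qed.

Lemma weval_gB_gB j j' : weval (gB m j ++ winv (gB m j')) = gmul (fb j) (ginv (fb j')).
Proof. by rewrite weval_cat weval_winv !weval_gB. Qed.

Lemma weval_relator i j i' j' :
  weval (gA n i ++ gB m j ++ winv (gB m j') ++ winv (gA n i')) =
  gmul (gmul (fa i) (fb j)) (ginv (gmul (fa i') (fb j'))).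
Proof.
by rewrite !weval_cat !weval_winv weval_gA weval_gB weval_gA weval_gB ginvM !gmulA.
Qed.

Lemma ncl_weval1 (S : word m n -> Prop) :
  (forall w, S w -> weval w = gone G) -> forall w, ncl S w -> weval w = gone G.
Proof.
have weval_ins u v x : weval (u ++ [:: x; linv x] ++ v) = weval (u ++ v).
  by rewrite !weval_cat; congr gmul; rewrite /= leval_linv gmulKr gmul1.
move=> S1 w; elim=> {w} [|w /S1|w _ IH|w v _ IH1 _ IH2|u w _ IH|u v x _ IH|u v x _] //.
- by rewrite weval_winv IH ginv1.
- by rewrite weval_cat IH1 IH2 gmul1.
- by rewrite !weval_cat IH gmul1 weval_winv gmulrV.
- by rewrite weval_ins.
- by rewrite weval_ins.
Qed.

Lemma Ntor_weval1 (P : {set {set cell m n}}) : torsion_free G ->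
  (forall w, relators P w -> weval w = gone G) ->
  forall w, Ntor P w -> weval w = gone G.
Proof.
move=> G_tf rel1 w [k]; elim: k w => [|k IH] w /=; first exact: ncl_weval1.
apply: ncl_weval1 => v [p p_gt0 /IH].
by rewrite weval_wpow; apply: G_tf.
Qed.

End WordEvaluation.

Section WordAlgebra.
Variables m n : nat.
Implicit Types u v w : word m n.

Lemma linvK : involutive (@linv m n).
Proof. by case=> b g; rewrite /linv /= negbK. Qed.

Lemma winv_cat u v : winv (u ++ v) = winv v ++ winv u.
Proof. by rewrite /winv map_cat rev_cat. Qed.

Lemma winvK : involutive (@winv m n).
Proof. by move=> w; rewrite /winv map_rev revK -map_comp (eq_map linvK) map_id. Qed.

Lemma ncl_cancel (S : word m n -> Prop) p u q :
  ncl S (p ++ u ++ winv u ++ q) <-> ncl S (p ++ q).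
Proof.
elim: u p q => [|x u IH] p q //=.
rewrite /winv /= rev_cons -cats1 -/(winv u) -!catA /=.
have -> : p ++ x :: u ++ winv u ++ linv x :: q = rcons p x ++ u ++ winv u ++ linv x :: q.
  by rewrite -cats1 -catA.
rewrite IH -cats1 -catA /=.
by split=> h; [apply: (ncl_del (x := x)) | apply: ncl_ins].
Qed.

End WordAlgebra.

Section NtorQuotient.
Variables (m n : nat) (P : {set {set cell m n}}).
Local Notation N := (Ntor P).
Implicit Types u v w : word m n.

Lemma Ntor_level_ncl k : exists S, Ntor_level P k = ncl S.
Proof. by case: k; eexists. Qed.

Lemma Ntor_level_le k k' w : (k <= k')%N -> Ntor_level P k w -> Ntor_level P k' w.
Proof.
move=> /subnKC <-; elim: (k' - k)%N => [|d IH] h; first by rewrite addn0.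
by rewrite addnS; apply: ncl_gen; exists 1%N; rewrite // /wpow /= cats0; apply: IH.
Qed.

Lemma Ntor_nil : N [::].
Proof. by exists 0%N; apply: ncl_nil. Qed.

Lemma Ntor_relator w : relators P w -> N w.
Proof. by exists 0%N; apply: ncl_gen. Qed.

Lemma Ntor_root w p : (0 < p)%N -> N (wpow w p) -> N w.
Proof. by move=> p_gt0 [k h]; exists k.+1; apply: ncl_gen; exists p. Qed.

Lemma Ntor_lift v w : (forall S, ncl S v -> ncl S w) -> N v -> N w.
Proof.
move=> vw [k]; have [S e] := Ntor_level_ncl k.
by exists k; rewrite e in p *; apply: vw.
Qed.

Lemma Ntor_winv w : N w -> N (winv w).
Proof. by apply: Ntor_lift => S; apply: ncl_inv. Qed.

Lemma Ntor_conj u w : N w -> N (u ++ w ++ winv u).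
Proof. by apply: Ntor_lift => S; apply: ncl_conj. Qed.

Lemma Ntor_cancel p u q : N (p ++ u ++ winv u ++ q) <-> N (p ++ q).
Proof. by split; apply: Ntor_lift => S /ncl_cancel. Qed.

Lemma Ntor_cat u v : N u -> N v -> N (u ++ v).
Proof.
case=> k hu [k' hv]; exists (maxn k k').
have [S e] := Ntor_level_ncl (maxn k k'); rewrite e; apply: ncl_mul; rewrite -e.
- exact: Ntor_level_le (leq_maxl _ _) hu.
- exact: Ntor_level_le (leq_maxr _ _) hv.
Qed.

Definition Ntor_eqv u v := N (u ++ winv v).

Lemma Ntor_eqv_refl u : Ntor_eqv u u.
Proof.
by rewrite /Ntor_eqv -[u ++ _]cat0s -[winv u]cats0 Ntor_cancel; apply: Ntor_nil.
Qed.

Lemma Ntor_eqv_sym u v : Ntor_eqv u v -> Ntor_eqv v u.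
Proof. by move/Ntor_winv; rewrite /Ntor_eqv winv_cat winvK. Qed.

Lemma Ntor_eqv_trans u v w : Ntor_eqv u v -> Ntor_eqv v w -> Ntor_eqv u w.
Proof.
by move=> uv /(Ntor_cat uv); rewrite -catA -{2}[v]winvK Ntor_cancel.
Qed.

Lemma Ntor_eqv_cat u u' v v' :
  Ntor_eqv u u' -> Ntor_eqv v v' -> Ntor_eqv (u ++ v) (u' ++ v').
Proof.
move=> uu' /(Ntor_conj u)/Ntor_cat/(_ uu').
by rewrite /Ntor_eqv winv_cat -!catA -{3}[u]winvK 2!catA Ntor_cancel -!catA.
Qed.

Lemma Ntor_eqv_winv u u' : Ntor_eqv u u' -> Ntor_eqv (winv u) (winv u').
Proof.
move/Ntor_eqv_sym/(Ntor_conj (winv u)).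
rewrite /Ntor_eqv !winvK -!catA -{3}[u]winvK -[winv (winv u)]cats0 catA.
by rewrite Ntor_cancel cats0.
Qed.

Definition Ntor_eqvb u v := asbool (Ntor_eqv u v).

Lemma Ntor_eqvb_equiv : equiv_class_of Ntor_eqvb.
Proof.
split=> [u|u v|v u w]; rewrite /Ntor_eqvb.
- exact/asboolP/Ntor_eqv_refl.
- by apply/asboolP/asboolP => /Ntor_eqv_sym.
- by move=> /asboolP uv /asboolP vw; apply/asboolP/(Ntor_eqv_trans uv vw).
Qed.

Local Open Scope quotient_scope.

Definition Ntor_equiv : equiv_rel (word m n) := EquivRelPack Ntor_eqvb_equiv.

(* [Ntor P] is the preimage of N_tor(Gamma_pi) among the words, so words modulo
   [Ntor_eqv] form Gamma_pi / N_tor(Gamma_pi). *)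
Definition Gamma_mod_Ntor := {eq_quot Ntor_equiv}.
Local Notation Q := Gamma_mod_Ntor.
Implicit Types x y z : Q.

Definition Ntor_class w : Q := \pi_Q w.

Lemma Ntor_class_eqP u v : Ntor_class u = Ntor_class v <-> Ntor_eqv u v.
Proof. by split=> [/(eqmodP Ntor_equiv)/asboolP|/asboolP/(eqmodP Ntor_equiv)]. Qed.

Lemma Ntor_class_reprK : cancel repr Ntor_class.
Proof. exact: reprK. Qed.

Lemma Ntor_eqv_repr u : Ntor_eqv (repr (Ntor_class u)) u.
Proof. by apply/Ntor_class_eqP; rewrite Ntor_class_reprK. Qed.

Definition qmul x y : Q := Ntor_class (repr x ++ repr y).
Definition qinv x : Q := Ntor_class (winv (repr x)).
Definition qone : Q := Ntor_class [::].

Lemma qmul_class u v : qmul (Ntor_class u) (Ntor_class v) = Ntor_class (u ++ v).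
Proof. by apply/Ntor_class_eqP/Ntor_eqv_cat; apply: Ntor_eqv_repr. Qed.

Lemma qinv_class u : qinv (Ntor_class u) = Ntor_class (winv u).
Proof. by apply/Ntor_class_eqP/Ntor_eqv_winv/Ntor_eqv_repr. Qed.

Lemma Ntor_class_eq1 w : Ntor_class w = qone <-> N w.
Proof. by rewrite Ntor_class_eqP /Ntor_eqv cats0. Qed.

Lemma qmulA x y z : qmul x (qmul y z) = qmul (qmul x y) z.
Proof.
rewrite -[x]Ntor_class_reprK -[y]Ntor_class_reprK -[z]Ntor_class_reprK.
by rewrite !qmul_class catA.
Qed.

Lemma qmul1 x : qmul qone x = x.
Proof. by rewrite -[x]Ntor_class_reprK qmul_class. Qed.

Lemma qmulV x : qmul (qinv x) x = qone.
Proof.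
rewrite -[x]Ntor_class_reprK qinv_class qmul_class Ntor_class_eq1 -{2}[repr x]winvK.
exact: Ntor_eqv_refl.
Qed.

Definition Ntor_quotient : group := @Defs.Group Q qmul qinv qone qmulA qmul1 qmulV.

Lemma Ntor_class_cat u v :
  gmul (Ntor_class u : Ntor_quotient) (Ntor_class v) = Ntor_class (u ++ v).
Proof. exact: qmul_class. Qed.

Lemma Ntor_quotient_torsion_free : torsion_free Ntor_quotient.
Proof.
have gpow_class w k :
    gpow (Ntor_class w : Ntor_quotient) k = Ntor_class (wpow w k).
  by elim: k => //= k ->; rewrite qmul_class.
move=> x k k_gt0; rewrite -[x]Ntor_class_reprK gpow_class => /Ntor_class_eq1 Nx.
by apply/Ntor_class_eq1/(Ntor_root k_gt0).
Qed.

End NtorQuotient.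

Section SeqFacts.
Variable T : Type.
Implicit Types s : seq T.

Lemma In_mem (U : eqType) (x : U) (s : seq U) : List.In x s <-> x \in s.
Proof.
elim: s => [|y s IH] //=; rewrite in_cons.
by split=> [[->|/IH->]|/orP[/eqP->|/IH]]; rewrite ?eqxx ?orbT; auto.
Qed.

Lemma uniq_NoDup (U : eqType) (s : seq U) : uniq s -> List.NoDup s.
Proof.
elim: s => [|y s IH] /=; first by constructor.
by case/andP=> ys us; constructor; [rewrite In_mem; apply/negP | apply: IH].
Qed.

Lemma List_map_map (U : Type) (f : T -> U) s : List.map f s = map f s.
Proof. by elim: s => //= x s ->. Qed.

Lemma In_nthP d s x : List.In x s <-> exists2 k, (k < size s)%N & nth d s k = x.
Proof.
elim: s => [|y s IH] /=; first by split=> // -[].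
split=> [[<-|/IH[k ? <-]]|[[|k] ? e]]; [by exists 0%N | by exists k.+1 | by left |].
by right; apply/IH; exists k.
Qed.

Lemma NoDup_nth_inj d s k k' : List.NoDup s ->
  (k < size s)%N -> (k' < size s)%N -> nth d s k = nth d s k' -> k = k'.
Proof.
elim: s k k' => [|y s IH] [|k] [|k'] //= /List.NoDup_cons_iff[ys nds] kS k'S e.
- by case: ys; apply/(In_nthP d); exists k'.
- by case: ys; apply/(In_nthP d); exists k.
- by rewrite (IH k k').
Qed.

Lemma sum_Permutation (K : nzRingType) (F : T -> K) s t :
  Permutation s t -> \sum_(h <- s) F h = \sum_(h <- t) F h.
Proof.
elim=> [|x l l' _ IH|x y l|l l' l'' _ -> _ ->] //; rewrite !big_cons ?IH //.
exact: addrCA.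
Qed.

End SeqFacts.

Section Enumerations.
Variables (K : nzRingType) (G : group) (m : nat).
Implicit Types (a : G -> K) (ga : 'I_m -> G).

Definition enumerates a ga :=
  injective ga /\ forall x, a x != 0 <-> exists i, x = ga i.

Lemma enumerates_support_list a ga :
  enumerates a ga -> support_list a (List.map ga (enum 'I_m)).
Proof.
case=> ga_inj supp; split.
  apply: FinFun.Injective_map_NoDup; first by move=> ? ?; apply: ga_inj.
  exact/uniq_NoDup/enum_uniq.
move=> x; rewrite supp List.in_map_iff.
by split=> [[i ->]|[i [<- _]]]; [exists i; rewrite In_mem mem_enum | exists i].
Qed.

Lemma enumerates_rank a ga : enumerates a ga -> rank_eq a m.
Proof.
move=> e; exists (List.map ga (enum 'I_m)).
rewrite List_map_map size_map size_enum_ord.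
by split; first exact: enumerates_support_list.
Qed.

Lemma rank_enumerates a : rank_eq a m -> exists ga, enumerates a ga.
Proof.
case=> s [[nds supp] size_s].
have lt_s (i : 'I_m) : (i < size s)%N by rewrite size_s.
exists (fun i => nth (gone G) s i); split.
  by move=> i i' /(NoDup_nth_inj nds (lt_s i) (lt_s i'))/val_inj.
move=> x; rewrite supp (In_nthP (gone G)) size_s.
by split=> [[k k_lt <-]|[i ->]]; [exists (Ordinal k_lt) | exists i].
Qed.

Lemma enumerates_comp a ga (f : 'I_m -> 'I_m) :
  bijective f -> enumerates a ga -> enumerates a (ga \o f).
Proof.
case=> g fK gK [ga_inj supp]; split; first exact/inj_comp/(can_inj fK).
move=> x; rewrite supp; split=> [[i ->]|[i ->]]; last by exists (f i).
by exists (g i); rewrite /= gK.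
Qed.

Definition enum_fun ga (r : 'I_m -> K) (x : G) : K :=
  \sum_i (if asbool (x = ga i) then r i else 0).

Lemma enum_fun_at ga r i : injective ga -> enum_fun ga r (ga i) = r i.
Proof.
move=> ga_inj; rewrite /enum_fun (bigD1 i) //= big1 => [|j ji].
  by case: asboolP => // _; rewrite addr0.
by case: asboolP => // /ga_inj eij; rewrite eij eqxx in ji.
Qed.

Lemma enum_funE a ga : enumerates a ga -> a =1 enum_fun ga (a \o ga).
Proof.
case=> ga_inj supp x; case: (boolP (a x == 0)) => [/eqP ax0 | /supp[i ->]].
  by rewrite ax0 /enum_fun big1 // => i _; case: asboolP => //= <-.
by rewrite enum_fun_at.
Qed.

Lemma enum_fun_enumerates ga r :
  injective ga -> (forall i, r i != 0) -> enumerates (enum_fun ga r) ga.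
Proof.
move=> ga_inj r_nz; split=> // x; split=> [|[i ->]]; last by rewrite enum_fun_at.
case: (pickP (fun i => asbool (x = ga i))) => [i /asboolP -> _|none]; first by exists i.
by rewrite /enum_fun big1 ?eqxx // => i _; rewrite none.
Qed.

End Enumerations.

Section CellCoefficients.
Variables (K : nzRingType) (G : group) (m n : nat).
Variables (a b : G -> K) (ga : 'I_m -> G) (gb : 'I_n -> G).
Hypotheses (ea : enumerates a ga) (eb : enumerates b gb).

Definition cell_coef (y : G) : K :=
  \sum_(q : cell m n | asbool (gmul (ga q.1) (gb q.2) = y)) a (ga q.1) * b (gb q.2).

Lemma gr_prod_coefE s y : support_list a s ->
  \sum_(h <- s) a h * b (gmul (ginv h) y) = cell_coef y.
Proof.
move=> [nds supp]; have [nds_ga supp_ga] := enumerates_support_list ea.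
have perm_s : Permutation s (List.map ga (enum 'I_m)).
  by apply: NoDup_Permutation => // x; rewrite -supp supp_ga.
rewrite (sum_Permutation _ perm_s) List_map_map big_map big_enum /= /cell_coef.
rewrite [RHS]big_mkcond -(pair_bigA _ (fun i j =>
  if asbool (gmul (ga i) (gb j) = y) then a (ga i) * b (gb j) else 0)) /=.
apply: eq_bigr => i _; rewrite (enum_funE eb) mulr_sumr; apply: eq_bigr => j _ /=.
have -> : asbool (gmul (ginv (ga i)) y = gb j) = asbool (gmul (ga i) (gb j) = y).
  by apply/asboolP/asboolP => [e|/gmul_solve//]; apply/gmul_solve.
by case: asboolP; rewrite ?mulr0.
Qed.

Lemma gr_prod_is_oneP :
  gr_prod_is_one a b <-> forall y, cell_coef y = (asbool (y = gone G))%:R.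
Proof.
split=> [ab1 y|coef1 s sa y /=]; last first.
  by rewrite (gr_prod_coefE _ sa) coef1; split=> [->|ny]; case: asboolP.
have sa := enumerates_support_list ea.
have [ab1y ab0y] := ab1 _ sa y; rewrite -(gr_prod_coefE _ sa).
by case: asboolP => [/ab1y|/ab0y].
Qed.

End CellCoefficients.

Section Refinement.
Variable T : finType.
Implicit Types P Q : {set {set T}}.

Lemma partition_cover Q x : partition Q [set: T] -> x \in cover Q.
Proof. by move/cover_partition->; rewrite inE. Qed.

Lemma refines_trans Q1 Q2 Q3 : refines Q1 Q2 -> refines Q2 Q3 -> refines Q1 Q3.
Proof.
move=> r12 r23 E /r12 [F /r23 [F' F'Q sF'] sF].
by exists F' => //; apply: subset_trans sF sF'.
Qed.

Lemma refines_pblock Q' Q x : partition Q' [set: T] -> partition Q [set: T] ->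
  refines Q' Q -> pblock Q' x \subset pblock Q x.
Proof.
move=> pQ' pQ /(_ _ (pblock_mem (partition_cover x pQ'))) [F FQ sub].
have xF : x \in F by apply: (subsetP sub); rewrite mem_pblock partition_cover.
by rewrite (def_pblock (partition_trivIset pQ) FQ xF).
Qed.

(* A proper refinement strictly shrinks this set, which bounds refinement chains. *)
Definition block_pairs Q := [set pq : T * T | pq.2 \in pblock Q pq.1].

Lemma refines_eq Q' Q : partition Q' [set: T] -> partition Q [set: T] ->
  refines Q' Q -> (#|block_pairs Q| <= #|block_pairs Q'|)%N -> Q' = Q.
Proof.
move=> pQ' pQ rQ le_card.
have sub : block_pairs Q' \subset block_pairs Q.
  by apply/subsetP => -[x y]; rewrite !inE; apply/subsetP/refines_pblock.
have /eqP eq_pairs : block_pairs Q' == block_pairs Q by rewrite eqEcard sub.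
have eq_pblock x : pblock Q' x = pblock Q x.
  by apply/setP => y; move/setP/(_ (x, y)): eq_pairs; rewrite !inE.
rewrite -(preim_partition_pblock pQ') -(preim_partition_pblock pQ).
by apply: eq_imset => x; apply/setP => y; rewrite !inE !eq_pblock.
Qed.

Lemma minimal_refinement (R : {set {set T}} -> Prop) P :
  partition P [set: T] -> R P ->
  exists Q, [/\ partition Q [set: T], R Q, refines Q P &
    forall Q', partition Q' [set: T] -> R Q' -> refines Q' Q -> Q' = Q].
Proof.
move=> pP RP.
pose ok Q := [&& partition Q [set: T], asbool (R Q) & asbool (refines Q P)].
have okP : ok P by apply/and3P; split=> //; apply/asboolP => // E EP; exists E.
case: (arg_minnP (fun Q => #|block_pairs Q|) okP).
move=> Q /and3P[pQ /asboolP RQ /asboolP rQP] minQ.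
exists Q; split=> // Q' pQ' RQ' rQ'Q; apply: refines_eq => //.
by apply: minQ; apply/and3P; split=> //; apply/asboolP => //; apply: refines_trans rQP.
Qed.

Lemma sum_partition_fibers (K : nzRingType) (X : Type) P (phi : T -> X)
    (F : T -> K) (z : T) :
  partition P [set: T] ->
  (forall E, E \in P -> {in E &, forall p q, phi p = phi q}) ->
  (forall E, E \in P -> \sum_(p in E) F p = (z \in E)%:R) ->
  forall y, \sum_(p | asbool (phi p = y)) F p = (asbool (phi z = y))%:R.
Proof.
move=> pP phi_const sumE y.
have block_sum E : E \in P ->
    \sum_(p in E | asbool (phi p = y)) F p = (asbool (phi z = y))%:R * (z \in E)%:R.
  move=> EP; case: (pickP [pred p in E | asbool (phi p = y)]) => [e|none].
    case/andP=> eE /asboolP ey.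
    rewrite (eq_bigl [in E]) => [|p]; last first.
      by apply: andb_idr => pE; apply/asboolP; rewrite -ey (phi_const _ EP p e).
    rewrite sumE //; case: (boolP (z \in E)) => [zE|_]; last by rewrite mulr0.
    by rewrite (phi_const _ EP z e) // ey; case: asboolP; rewrite ?mul1r.
  rewrite big_pred0 //; case: (boolP (z \in E)) => [zE|_]; last by rewrite mulr0.
  by have := none z; rewrite /= zE /=; case: asboolP; rewrite ?mul0r.
have one_block : \sum_(E in P) (z \in E)%:R = 1 :> K.
  rewrite (bigD1 (pblock P z)) ?pblock_mem ?partition_cover //=.
  rewrite mem_pblock partition_cover // big1 ?addr0 // => E /andP[EP nE].
  case: (boolP (z \in E)) => // zE.
  by rewrite (def_pblock (partition_trivIset pP) EP zE) eqxx in nE.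
rewrite (eq_bigl (fun p => (p \in [set: T]) && asbool (phi p = y))) => [|p]; last first.
  by rewrite inE.
rewrite (set_partition_big_cond _ pP).
under eq_bigr => E EP do rewrite block_sum //.
by rewrite -mulr_sumr one_block mulr1.
Qed.

End Refinement.

Section Separation.
Variables (m n : nat) (P : {set {set cell m n}}).

Definition Ntor_separates : Prop :=
  (forall i i' : 'I_m, Ntor P (gA n i ++ winv (gA n i')) -> i = i') /\
  (forall j j' : 'I_n, Ntor P (gB m j ++ winv (gB m j')) -> j = j').

Lemma Ntor_separates_nondegenerate : Ntor_separates -> Defs.nondegenerate P.
Proof.
by case=> sepA sepB; split=> [i i' /eqP ne h|j j' /eqP ne h]; apply: ne;
  [apply: sepA | apply: sepB]; exists 0%N.
Qed.

Lemma Ntor_separates_ord k (f : 'I_k -> word m n) :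
  (forall i i', Ntor P (f i ++ winv (f i')) -> i = i') <->
  ~ exists i i' : 'I_k, (i < i')%N /\ Ntor P (f i ++ winv (f i')).
Proof.
split=> [sep [i [i' [lt /sep eq_ii']]]|no i i' Nii']; first by rewrite eq_ii' ltnn in lt.
case: (ltngtP i i') => [lt|lt|/val_inj //]; case: no; first by exists i, i'.
by exists i', i; split=> //; move: (Ntor_winv Nii'); rewrite winv_cat winvK.
Qed.

Lemma Ntor_separatesP : Ntor_separates <->
  ~ ((exists i i' : 'I_m, (i < i')%N /\ Ntor P (gA n i ++ winv (gA n i')))
     \/ (exists j j' : 'I_n, (j < j')%N /\ Ntor P (gB m j ++ winv (gB m j')))).
Proof.
rewrite /Ntor_separates !Ntor_separates_ord.
split=> [[noA noB] [|]|no]; [exact: noA | exact: noB |].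
by split=> h; apply: no; [left|right].
Qed.

End Separation.

Section Realizability.
Variables (K : nzRingType) (m n : nat) (hm : (0 < m)%N) (hn : (0 < n)%N).

Definition cell00 : cell m n := (Ordinal hm, Ordinal hn).

Lemma realizableE (P : {set {set cell m n}}) (r : 'I_m -> K) (s : 'I_n -> K) :
  realizable P r s <->
  forall E, E \in P -> \sum_(p in E) r p.1 * s p.2 = (cell00 \in E)%:R.
Proof.
have originE E :
    (exists2 p, p \in E & (nat_of_ord p.1 == 0%N) && (nat_of_ord p.2 == 0%N)) <->
    cell00 \in E.
  split=> [[[[i hi] [j hj]] pE /andP[/eqP /= i0 /eqP /= j0]]|]; last by exists cell00.
  subst; rewrite (_ : cell00 = (Ordinal hi, Ordinal hj)) //.
  by congr pair; apply: val_inj.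
split=> [realP E EP|sumE E EP /=].
  have [c1 c0] := realP E EP; case: (boolP (cell00 \in E)) => zE.
    by apply: c1; apply/originE.
  by apply: c0; rewrite originE; apply/negP.
rewrite sumE //; split=> [/originE -> //|no].
by case: (boolP (cell00 \in E)) => // /originE.
Qed.

End Realizability.

Section UnitPairToULIE.
Variables (K : nzRingType) (m n : nat) (hm : (0 < m)%N) (hn : (0 < n)%N).
Variables (G : group) (a b : G -> K) (ga : 'I_m -> G) (gb : 'I_n -> G).
Hypotheses (G_tf : torsion_free G) (ea : enumerates a ga) (eb : enumerates b gb).
Hypothesis ab1 : gr_prod_is_one a b.
Let z := cell00 hm hn.
Hypothesis g00 : gmul (ga z.1) (gb z.2) = gone G.

Let cell_val (q : cell m n) : G := gmul (ga q.1) (gb q.2).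
Let r (i : 'I_m) : K := a (ga i).
Let s (j : 'I_n) : K := b (gb j).
Let same_val : rel (cell m n) := fun p q => asbool (cell_val p = cell_val q).
Let P0 := equivalence_partition same_val [set: cell m n].

Let P0_partition : partition P0 [set: cell m n].
Proof.
apply: equivalence_partitionP => p q w _ _ _; rewrite /same_val.
by split; [apply/asboolP | move/asboolP->].
Qed.

Let P0_realizable : realizable P0 r s.
Proof.
apply/(realizableE hm hn) => _ /imsetP[x _ ->].
rewrite (eq_bigl (fun q => asbool (cell_val q = cell_val x))) => [|q]; last first.
  by rewrite !inE; apply/asboolP/asboolP => ->.
rewrite [LHS](_ : _ = cell_coef a b ga gb (cell_val x)) //.
rewrite ((gr_prod_is_oneP ea eb).1 ab1) !inE /same_val.
by have -> : cell_val (cell00 hm hn) = gone G := g00.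
Qed.

Lemma ULIE_of_normalized_unit_pair :
  exists P : {set {set cell m n}}, in_ULIE K P /\ Ntor_separates P.
Proof.
have [Q [pQ realQ Q_P0 minQ]] :=
  minimal_refinement (R := fun Q => realizable Q r s) P0_partition P0_realizable.
have cell_val_Q p q : same_block Q p q -> cell_val p = cell_val q.
  case=> E EQ /andP[pE qE]; have [_ /imsetP[x _ ->] sub] := Q_P0 E EQ.
  by move: (subsetP sub p pE) (subsetP sub q qE); rewrite !inE => /asboolP <- /asboolP <-.
(* Translating keeps the coincidences among the products and sends a_0, b_0 to 1. *)
pose fa i := gmul (ginv (ga z.1)) (ga i).
pose fb j := gmul (gb j) (ginv (gb z.2)).
have fa_inj : injective fa.
  by move=> i i' /(congr1 (gmul (ga z.1))); rewrite !gmulKr => /ea.1.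
have fb_inj : injective fb.
  move=> j j' /(congr1 (fun g => gmul g (gb z.2))); rewrite -!gmulA gmulV !gmulr1.
  exact: eb.1.
have fa_fb i j :
    gmul (fa i) (fb j) = gmul (ginv (ga z.1)) (gmul (cell_val (i, j)) (ginv (gb z.2))).
  by rewrite /fa /fb /cell_val !gmulA.
have relators1 w : relators Q w -> weval fa fb w = gone G.
  case=> [[i [i0 ->]]|[[j [j0 ->]]|[i [j [i' [j' [ij ->]]]]]]].
  - by rewrite weval_gA /fa (_ : i = z.1) ?gmulV //; apply: val_inj.
  - by rewrite weval_gB /fb (_ : j = z.2) ?gmulrV //; apply: val_inj.
  - by rewrite weval_relator !fa_fb (cell_val_Q _ _ ij) gmulrV.
have sepQ : Ntor_separates Q.
  split=> [i i'|j j'] /(Ntor_weval1 G_tf relators1).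
    by rewrite weval_gA_gA => /gmulrV_eq1/fa_inj.
  by rewrite weval_gB_gB => /gmulrV_eq1/fb_inj.
exists Q; split=> //; split=> //; split; first exact: Ntor_separates_nondegenerate.
exists r, s; split=> [i|]; first by apply/ea.2; exists i.
by split=> [j|]; first by apply/eb.2; exists j.
Qed.

End UnitPairToULIE.

Lemma ULIE_of_unit_pair (K : nzRingType) (m n : nat) (hm : (0 < m)%N) (hn : (0 < n)%N)
    (G : group) (a b : G -> K) :
  torsion_free G -> rank_eq a m -> rank_eq b n -> gr_prod_is_one a b ->
  exists P : {set {set cell m n}}, in_ULIE K P /\ Ntor_separates P.
Proof.
move=> G_tf /rank_enumerates[ga ea] /rank_enumerates[gb eb] ab1.
(* The coefficient of 1 in ab is 1, so some a_i b_j is 1; reorder it to a_0 b_0. *)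
case: (pickP (fun q : cell m n => asbool (gmul (ga q.1) (gb q.2) = gone G))).
  move=> [i0 j0] /asboolP /= g00.
  pose za := Ordinal hm; pose zb := Ordinal hn.
  apply: (@ULIE_of_normalized_unit_pair _ _ _ hm hn _ a b
    (ga \o tperm i0 za) (gb \o tperm j0 zb)) => //.
  - exact: enumerates_comp (inv_bij (tpermK _ _)) ea.
  - exact: enumerates_comp (inv_bij (tpermK _ _)) eb.
  - by rewrite /= !tpermR.
move=> none; have := (gr_prod_is_oneP ea eb).1 ab1 (gone G).
rewrite /cell_coef big_pred0 // => /esym/eqP.
by case: asboolP => // _; rewrite oner_eq0.
Qed.

Section ULIEToUnitPair.
Variables (K : nzRingType) (m n : nat) (hm : (0 < m)%N) (hn : (0 < n)%N).
Variables (P : {set {set cell m n}}) (r : 'I_m -> K) (s : 'I_n -> K).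
Hypotheses (pP : partition P [set: cell m n]) (realP : realizable P r s).
Hypotheses (r_nz : forall i, r i != 0) (s_nz : forall j, s j != 0).
Hypothesis sepP : Ntor_separates P.

Let A (i : 'I_m) : Ntor_quotient P := Ntor_class P (gA n i).
Let B (j : 'I_n) : Ntor_quotient P := Ntor_class P (gB m j).
Let cell_val (q : cell m n) : Ntor_quotient P := gmul (A q.1) (B q.2).

Let A_inj : injective A.
Proof. by move=> i i' /Ntor_class_eqP; apply: sepP.1. Qed.

Let B_inj : injective B.
Proof. by move=> j j' /Ntor_class_eqP; apply: sepP.2. Qed.

Let cell_val_block E : E \in P -> {in E &, forall p q, cell_val p = cell_val q}.
Proof.
move=> EP [i j] [i' j'] ijE ij'E; rewrite /cell_val !Ntor_class_cat; apply/Ntor_class_eqP.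
rewrite /Ntor_eqv winv_cat -!catA; apply/Ntor_relator; right; right.
by exists i, j, i', j'; split; first by exists E; rewrite // ijE ij'E.
Qed.

Let cell_val00 : cell_val (cell00 hm hn) = gone (Ntor_quotient P).
Proof.
rewrite /cell_val Ntor_class_cat; apply/Ntor_class_eq1.
apply: Ntor_cat; apply: Ntor_relator; first by left; exists (Ordinal hm).
by right; left; exists (Ordinal hn).
Qed.

Lemma unit_pair_of_separated_realizable : exists G : group, torsion_free G /\
  exists a b : G -> K, rank_eq a m /\ rank_eq b n /\ gr_prod_is_one a b.
Proof.
have ea := enum_fun_enumerates A_inj r_nz.
have eb := enum_fun_enumerates B_inj s_nz.
exists (Ntor_quotient P); split; first exact: Ntor_quotient_torsion_free.
exists (enum_fun A r), (enum_fun B s).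
split; [exact: enumerates_rank ea | split; first exact: enumerates_rank eb].
apply/(gr_prod_is_oneP ea eb) => y; rewrite /cell_coef.
under eq_bigr => q _ do rewrite !enum_fun_at //.
rewrite (sum_partition_fibers (z := cell00 hm hn) pP cell_val_block _ y).
  by rewrite cell_val00; case: asboolP => [->|ne]; case: asboolP => // /esym.
exact/(realizableE hm hn).
Qed.

End ULIEToUnitPair.

Theorem theorem6p5 (K : unitRingType)
    (K_div : forall x : K, x != 0%R -> x \is a GRing.unit)
    (m n : nat) (hm : (2 <= m)%N) (hn : (2 <= n)%N) :
  (forall G : group, torsion_free G ->
     ~ exists a b : G -> K, rank_eq a m /\ rank_eq b n /\ gr_prod_is_one a b)
  <->
  (forall P : {set {set cell m n}}, in_ULIE K P ->
     (exists i i' : 'I_m, (i < i')%N /\ Ntor P (gA n i ++ winv (gA n i')))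
     \/ (exists j j' : 'I_n, (j < j')%N /\ Ntor P (gB m j ++ winv (gB m j')))).
Proof.
have [hm0 hn0] := (ltnW hm, ltnW hn).
split=> [no_pair P [pP [_ [r [s [r_nz [s_nz [realP _]]]]]]]|sep_ULIE G G_tf].
  apply: NNPP => /Ntor_separatesP sepP.
  have [G [G_tf pair]] :=
    unit_pair_of_separated_realizable hm0 hn0 pP realP r_nz s_nz sepP.
  exact: no_pair G G_tf pair.
move=> [a [b [ra [rb ab1]]]].
have [P [ULIE_P sepP]] := ULIE_of_unit_pair hm0 hn0 G_tf ra rb ab1.
exact: (Ntor_separatesP P).1 sepP (sep_ULIE P ULIE_P).
Qed.
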